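(* Let $\mathcal{JF}=(\mathcal F,\mathcal F_d,R)$ be a complementary justification frame and $x\in\mathcal F_d$. If $\tau$ is a positional strategy for player $F$ in $G_{\mathcal{JF}}$, then $J_\tau(x)$ (the play graph of $\tau$ in $x$ with rule symbols filtered out and every label $y$ replaced by $\sim y$) is a connected, locally complete graph-like justification in $\mathcal{JF}$ with $\sim x$ as a root. If $\tau$ is a general strategy for $F$, then $J_\tau(x)$ (obtained in the same way from the play tree of $\tau$ in $x$) is a connected, locally complete tree-like justification in $\mathcal{JF}$ with $\sim x$ as a root.
   Context: Let $\mathcal F$ be a set (fact space) containing $\mathcal L=\{\mathbf t,\mathbf f,\mathbf u\}$ with an involution $\sim$ satisfying $\sim\mathbf t=\mathbf f$, $\sim\mathbf u=\mathbf u$, $\sim x\ne x$ for $x\ne\mathbf u$; $\sim A=\{\sim a:a\in A\}$. A justification frame is $\mathcal{JF}=(\mathcal F,\mathcal F_d,R)$ where $\mathcal F_d\subseteq\mathcal F$ satisfies $\sim\mathcal F_d=\mathcal F_d$, $\mathcal F_d\cap\mathcal L=\emptyset$, and $R\subseteq\mathcal F_d\times2^{\mathcal F}$ is a set of rules $x\gets A$ with nonempty bodies such that every $x\in\mathcal F_d$ heads a rule; $\mathcal F_o=\mathcal F\setminus\mathcal F_d$. A selection function for $x\in\mathcal F_d$ assigns to every body $A$ of a rule $x\gets A$ an element $s(A)\in A$; $\mathrm{Im}(s)$ is its image. $R^*$ is the set of all rules $\sim x\gets\sim\mathrm{Im}(s)$ with $x\in\mathcal F_d$ and $s$ a selection function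 for $x$. The frame is complementary if $R^*=R$. A justification in $\mathcal{JF}$ is a directed graph $(N,E)$ with labelling $\ell:N\to\mathcal F$ such that each internal node $n$ (node with an outgoing edge) has $\ell(n)\in\mathcal F_d$ and $\ell(n)\gets\{\ell(m):(n,m)\in E\}\in R$; graph-like if $\ell$ is injective; tree-like if its underlying undirected graph is acyclic; locally complete if no leaf is labelled by a defined fact; connected if its underlying undirected graph is connected; $y$ is a root if some node labelled $y$ reaches every node. Game graph $G_{\mathcal{JF}}$: states $S_T=\mathcal F$ (owned by $T$) and $S_F=\{r_{x\gets A}:x\gets A\in R\}$ (owned by $F$), edges $(x,r_{x\gets A})$ and $(r_{x\gets A},y)$ for every rule $x\gets A$, $y\in A$. A general strategy for $P\in\{T,F\}$ maps each finite path whose last state $s\in S_P$ has an outgoing edge to an outgoing edge of $s$; a positional strategy depends only on the last state. A path $s_0s_1\cdots$ is consistent with a strategy $\rho$ of $P$ if $\rho(s_0\cdots s_i)=(s_i,s_{i+1})$ whenever $s_i\in S_P$ and $s_{i+1}$ exists. The play tree of a general strategy $\rho$ in $x$ has as nodes the finite paths from $x$ consistent with $\rho$, labelled by their last state, with edges to one-step extensions; the play graph of a positional $\rho$ in $x$ is the subgraph of $G_{\mathcal{JF}}$ of states and edges on paths from $x$ consistent with $\rho$. Filtering out rule symbols: delete rule-symbol nodes and add an edge $(n,m)$ whenever $(n,k),(k,m)$ were edges with $k$ a rule-symbol node. *)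

From Stdlib Require Import List Relations.
Import ListNotations.
Set Implicit Arguments.

Section Defs.
Variable F : Type.

Definition img (f : F -> F) (A : F -> Prop) : F -> Prop :=
  fun z => exists a, A a /\ z = f a.

Definition fact_space (neg : F -> F) (t f u : F) : Prop :=
  (forall y, neg (neg y) = y) /\ neg t = f /\ neg u = u /\
  (forall y, y <> u -> neg y <> y) /\ t <> f /\ t <> u /\ f <> u.

(* Justification frame (F, Fd, R): a rule x <- A is R x A. *)
Definition jframe (neg : F -> F) (t f u : F) (Fd : F -> Prop)
  (R : F -> (F -> Prop) -> Prop) : Prop :=
  (forall y, Fd y <-> img neg Fd y) /\
  ~ Fd t /\ ~ Fd f /\ ~ Fd u /\
  (forall y A, R y A -> Fd y) /\
  (forall y A, R y A -> exists z, A z) /\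
  (forall y, Fd y -> exists A, R y A).

Definition selection (R : F -> (F -> Prop) -> Prop) (x : F) (s : (F -> Prop) -> F) :=
  forall A, R x A -> A (s A).

Definition Im_sel (R : F -> (F -> Prop) -> Prop) (x : F) (s : (F -> Prop) -> F) :
  F -> Prop := fun y => exists A, R x A /\ s A = y.

Definition Rstar (neg : F -> F) (Fd : F -> Prop) (R : F -> (F -> Prop) -> Prop)
  (y : F) (B : F -> Prop) : Prop :=
  exists x s, Fd x /\ selection R x s /\ y = neg x /\ B = img neg (Im_sel R x s).

Definition complementary (neg : F -> F) (Fd : F -> Prop)
  (R : F -> (F -> Prop) -> Prop) : Prop :=
  forall y B, Rstar neg Fd R y B <-> R y B.

Section Just.
Variables (Fd : F -> Prop) (R : F -> (F -> Prop) -> Prop).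
Variables (N : Type) (E : N -> N -> Prop) (lab : N -> F).

Definition internal (n : N) : Prop := exists m, E n m.

Definition justification : Prop :=
  forall n, internal n ->
    Fd (lab n) /\ R (lab n) (fun y => exists m, E n m /\ lab m = y).

Definition graph_like : Prop := forall n m, lab n = lab m -> n = m.

Definition uadj (a b : N) : Prop := E a b \/ E b a.

Fixpoint uchain (a : N) (l : list N) : Prop :=
  match l with
  | [] => True
  | b :: l' => uadj a b /\ uchain b l'
  end.

(* underlying undirected (multi)graph acyclic: no self-loop, no pair of
   opposite edges, and no simple cycle on >= 3 distinct nodes *)
Definition tree_like : Prop :=
  (forall n, ~ E n n) /\
  (forall n m, E n m -> ~ E m n) /\
  ~ (exists a l, NoDup (a :: l) /\ 2 <= length l /\ uchain a l /\
                 uadj (last l a) a).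

Definition locally_complete : Prop :=
  forall n, ~ internal n -> ~ Fd (lab n).

Definition connected : Prop :=
  forall n m, clos_refl_trans N uadj n m.

Definition is_root (y : F) : Prop :=
  exists n, lab n = y /\ forall m, clos_refl_trans N E n m.
End Just.

Inductive gstate : Type :=
| ST (y : F)                    (* fact state, owned by T *)
| SF (y : F) (A : F -> Prop).   (* rule symbol r_{y <- A}, owned by F *)

Definition fact_of (s : gstate) : F :=
  match s with ST y => y | SF y _ => y end.

Section Game.
Variable R : F -> (F -> Prop) -> Prop.

Definition valid_state (s : gstate) : Prop :=
  match s with ST _ => True | SF y A => R y A end.

Definition gedge (s s' : gstate) : Prop :=
  match s, s' with
  | ST y, SF y' A => y' = y /\ R y A
  | SF y A, ST z => R y A /\ A z
  | _, _ => False
  end.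

Fixpoint chain (a : gstate) (l : list gstate) : Prop :=
  match l with
  | [] => True
  | b :: l' => gedge a b /\ chain b l'
  end.

(* A finite path is s0 :: l with valid_state s0 and chain s0 l;
   its last state is last l s0. *)

(* General strategy for F: to every finite path ending in a rule state
   r_{y<-A} it assigns an outgoing edge, represented by its target fact. *)
Definition gen_strategy (tau : gstate -> list gstate -> F) : Prop :=
  forall s0 l y A, valid_state s0 -> chain s0 l -> last l s0 = SF y A ->
    A (tau s0 l).

Definition pos_strategy (tau : F -> (F -> Prop) -> F) : Prop :=
  forall y A, R y A -> A (tau y A).

Definition gen_consistent (tau : gstate -> list gstate -> F)
  (s0 : gstate) (l : list gstate) : Prop :=
  forall l1 s l2, l = l1 ++ s :: l2 ->
    forall y A, last l1 s0 = SF y A -> s = ST (tau s0 l1).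

Definition pos_consistent (tau : F -> (F -> Prop) -> F)
  (s0 : gstate) (l : list gstate) : Prop :=
  forall l1 s l2, l = l1 ++ s :: l2 ->
    forall y A, last l1 s0 = SF y A -> s = ST (tau y A).

Definition on_path (a b : gstate) (L : list gstate) : Prop :=
  exists l1 l2, L = l1 ++ a :: b :: l2.

Section Pos.
Variables (neg : F -> F) (tau : F -> (F -> Prop) -> F) (x : F).

Definition pos_play (l : list gstate) : Prop :=
  chain (ST x) l /\ pos_consistent tau (ST x) l.

(* fact states of the play graph (rule states are filtered out) *)
Definition JposN : Type :=
  { y : F | exists l, pos_play l /\ In (ST y) (ST x :: l) }.

Definition Jpos_lab (n : JposN) : F := neg (proj1_sig n).

(* y -> z iff y -> r_{y<-A} -> z are both edges of the play graph *)
Definition JposE (n m : JposN) : Prop :=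
  exists A,
    (exists l, pos_play l /\ on_path (ST (proj1_sig n)) (SF (proj1_sig n) A) (ST x :: l)) /\
    (exists l, pos_play l /\ on_path (SF (proj1_sig n) A) (ST (proj1_sig m)) (ST x :: l)).
End Pos.

Section Gen.
Variables (neg : F -> F) (tau : gstate -> list gstate -> F) (x : F).

(* nodes of the play tree: finite paths ST x :: p consistent with tau;
   we keep those whose last state is a fact state *)
Definition gen_node (p : list gstate) : Prop :=
  chain (ST x) p /\ gen_consistent tau (ST x) p /\
  exists y, last p (ST x) = ST y.

Definition JgenN : Type := { p : list gstate | gen_node p }.

Definition Jgen_lab (n : JgenN) : F := neg (fact_of (last (proj1_sig n) (ST x))).

(* n -> n ++ [r] -> n ++ [r; z] with r a rule symbol *)
Definition JgenE (n m : JgenN) : Prop :=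
  exists y A z, proj1_sig m = proj1_sig n ++ [SF y A; ST z].
End Gen.
End Game.
End Defs.

(* Let tau be a strategy of F and n a fact node of its play graph/tree
   carrying the fact y.  In the game, T chooses a rule y <- A and F answers
   with some element of A; so the children of n are obtained from the bodies
   of the rules for y by a selection function.  After relabelling every node
   by its complement, n becomes a node ~y whose children form ~Im(s), the body
   of a rule of R* = R (the frame is complementary).  Connectedness follows from the root x reaching every
   node, graph-likeness from injectivity of ~ and tree-likeness from a rank
   (the play length) that increases along edges with unique parents. *)

From Stdlib Require Import Arith List Relations ProofIrrelevance
  FunctionalExtensionality PropExtensionality Lia Permutation.
Import ListNotations.

Lemma last_cons {A : Type} (l : list A) : forall a b, last (b :: l) a = last l b.
Proof.
  induction l as [|c l IH]; intros a b; [reflexivity|].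
  change (last (c :: l) a = last (c :: l) b). rewrite !IH. reflexivity.
Qed.

Lemma last_in {A : Type} (l : list A) : forall a, In (last l a) (a :: l).
Proof.
  induction l as [|c l IH]; intros a; [left; reflexivity|].
  rewrite last_cons. right. apply IH.
Qed.

Lemma cons_as_snoc {A : Type} (l : list A) a : exists k, a :: l = k ++ [last l a].
Proof.
  exists (removelast (a :: l)). rewrite <- (last_cons l a a).
  apply app_removelast_last. discriminate.
Qed.

Lemma sig_ext {A : Type} (P : A -> Prop) (a b : {z | P z}) :
  proj1_sig a = proj1_sig b -> a = b.
Proof.
  destruct a as [a Ha], b as [b Hb]; simpl; intros ->. f_equal. apply proof_irrelevance.
Qed.

Fixpoint walk {T : Type} (P : T -> T -> Prop) (a : T) (l : list T) : Prop :=
  match l with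
  | [] => True
  | b :: l' => P a b /\ walk P b l'
  end.

Section Walks.
Variables (T : Type) (P : T -> T -> Prop).

Lemma walk_app l1 : forall a l2,
  walk P a (l1 ++ l2) <-> walk P a l1 /\ walk P (last l1 a) l2.
Proof.
  induction l1 as [|b l1 IH]; intros a l2; [simpl; tauto|].
  rewrite last_cons. simpl. rewrite IH. tauto.
Qed.

Lemma walk_snoc l a b : walk P a (l ++ [b]) <-> walk P a l /\ P (last l a) b.
Proof. rewrite walk_app. simpl. tauto. Qed.

Lemma walk_visits_reachable l : forall a b, walk P a l -> In b (a :: l) ->
  clos_refl_trans T P a b.
Proof.
  induction l as [|c l IH]; intros a b Hw [<-|Hin]; try apply rt_refl.
  - destruct Hin.
  - destruct Hw as [Hac Hw]. apply rt_trans with c; [apply rt_step; exact Hac|].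
    apply IH; [exact Hw|exact Hin].
Qed.

Lemma reachable_walk a b : clos_refl_trans T P a b ->
  exists l, walk P a l /\ last l a = b.
Proof.
  intros Hr. apply clos_rt_rtn1 in Hr.
  induction Hr as [|b c Hbc _ [l [Hw Hl]]]; [exists []; split; [exact I|reflexivity]|].
  exists (l ++ [c]). rewrite walk_snoc, last_last, Hl. tauto.
Qed.

Lemma visited_iff_reachable a b :
  (exists l, walk P a l /\ In b (a :: l)) <-> clos_refl_trans T P a b.
Proof.
  split.
  - intros [l [Hw Hin]]. exact (walk_visits_reachable l a b Hw Hin).
  - intros Hr. destruct (reachable_walk a b Hr) as [l [Hw <-]].
    exists l. split; [exact Hw|apply last_in].
Qed.

Lemma walk_traverses l1 : forall a l b c l2, walk P a l ->
  a :: l = l1 ++ b :: c :: l2 -> clos_refl_trans T P a b /\ P b c.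
Proof.
  induction l1 as [|d l1 IH]; intros a l b c l2 Hw Heq; simpl in Heq.
  - injection Heq as -> ->. split; [apply rt_refl|exact (proj1 Hw)].
  - injection Heq as -> Hl. destruct l as [|e l]; [destruct l1; discriminate|].
    destruct Hw as [Hde Hw]. destruct (IH e l b c l2 Hw Hl) as [Hr Hbc].
    split; [|exact Hbc]. apply rt_trans with e; [apply rt_step|]; assumption.
Qed.

Lemma traversed_iff_step a b c :
  (exists l, walk P a l /\ exists l1 l2, a :: l = l1 ++ b :: c :: l2) <->
  clos_refl_trans T P a b /\ P b c.
Proof.
  split.
  - intros [l [Hw [l1 [l2 Heq]]]]. exact (walk_traverses l1 a l b c l2 Hw Heq).
  - intros [Hr Hbc]. destruct (reachable_walk a b Hr) as [l [Hw Hl]].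
    exists (l ++ [c]). split; [rewrite walk_snoc, Hl; tauto|].
    destruct (cons_as_snoc l a) as [k Hk]. rewrite Hl in Hk.
    exists k, []. rewrite app_comm_cons, Hk, <- app_assoc. reflexivity.
Qed.
End Walks.

(* Conditions on every element [s] of a list, given the prefix [l1] before it
   (the shape of the consistency of plays with a strategy), behave like a
   conjunction over the list. *)
Lemma history_snoc {T : Type} (Q : list T -> T -> Prop) l b :
  (forall l1 s l2, l ++ [b] = l1 ++ s :: l2 -> Q l1 s) <->
  (forall l1 s l2, l = l1 ++ s :: l2 -> Q l1 s) /\ Q l b.
Proof.
  split.
  - intros H. split; [|apply (H l b []); reflexivity].
    intros l1 s l2 ->. apply (H l1 s (l2 ++ [b])). rewrite <- app_assoc. reflexivity.
  - intros [H1 H2] l1 s l2 Heq.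
    destruct l2 as [|c l2'] using rev_ind.
    + apply app_inj_tail in Heq. destruct Heq as [-> ->]. exact H2.
    + rewrite app_comm_cons, app_assoc in Heq. apply app_inj_tail in Heq.
      exact (H1 _ _ _ (proj1 Heq)).
Qed.

Lemma history_nil {T : Type} (Q : list T -> T -> Prop) :
  forall l1 s l2, [] = l1 ++ s :: l2 -> Q l1 s.
Proof. intros l1 s l2 H. destruct l1; discriminate. Qed.

Lemma chain_walk {F : Type} (R : F -> (F -> Prop) -> Prop) l : forall a,
  chain R a l <-> walk (gedge R) a l.
Proof. induction l as [|b l IH]; intros a; simpl; [tauto|]. rewrite IH. tauto. Qed.

Section Graphs.
Variables (N : Type) (E : N -> N -> Prop).

Lemma reach_uadj a b : clos_refl_trans N E a b ->
  clos_refl_trans N (uadj E) a b /\ clos_refl_trans N (uadj E) b a.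
Proof.
  induction 1 as [a b H|a|a b c _ [I1 I2] _ [I3 I4]].
  - split; apply rt_step; unfold uadj; auto.
  - split; apply rt_refl.
  - split; eapply rt_trans; eauto.
Qed.

Lemma connected_of_rooted r : (forall n, clos_refl_trans N E r n) -> connected E.
Proof.
  intros H n m. apply rt_trans with r;
    [exact (proj2 (reach_uadj _ _ (H n)))|exact (proj1 (reach_uadj _ _ (H m)))].
Qed.

Definition ucycle (c : list N) : Prop :=
  match c with
  | [] => False
  | a :: l => NoDup (a :: l) /\ 2 <= length l /\ uchain E a l /\ uadj E (last l a) a
  end.

Lemma uchain_snoc l : forall a b,
  uchain E a (l ++ [b]) <-> uchain E a l /\ uadj E (last l a) b.
Proof.
  induction l as [|c l IH]; intros a b; [simpl; tauto|].
  rewrite last_cons. simpl. rewrite IH. tauto.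
Qed.

Lemma ucycle_rotate1 a l : ucycle (a :: l) -> ucycle (l ++ [a]).
Proof.
  destruct l as [|b l]; [simpl; lia|].
  intros [Hnd [Hlen [[Hab Hch] Hcl]]]. rewrite last_cons in Hcl.
  change (ucycle (b :: (l ++ [a]))). repeat split.
  - exact (Permutation_NoDup (Permutation_cons_append (b :: l) a) Hnd).
  - rewrite length_app. simpl in *. lia.
  - apply uchain_snoc. tauto.
  - rewrite last_last. unfold uadj in *. tauto.
Qed.

Lemma ucycle_rotate l1 : forall l2, ucycle (l1 ++ l2) -> ucycle (l2 ++ l1).
Proof.
  induction l1 as [|a l1 IH]; intros l2 H; [rewrite app_nil_r; exact H|].
  apply ucycle_rotate1 in H. rewrite <- app_assoc in H.
  apply IH in H. rewrite <- app_assoc in H. exact H.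
Qed.

Lemma exists_max (rank : N -> nat) (c : list N) :
  c <> [] -> exists w, In w c /\ forall v, In v c -> rank v <= rank w.
Proof.
  induction c as [|a c IH]; [congruence|]. intros _.
  destruct c as [|b c]; [exists a; split; [left; auto|intros v [->|[]]; lia]|].
  destruct IH as [w [Hw Hmax]]; [discriminate|].
  destruct (Compare_dec.le_gt_dec (rank a) (rank w)).
  - exists w. split; [right; exact Hw|]. intros v [<-|Hv]; [lia|exact (Hmax v Hv)].
  - exists a. split; [left; auto|]. intros v [<-|Hv]; [lia|specialize (Hmax v Hv); lia].
Qed.

Section Ranked.
Variable rank : N -> nat.
Hypotheses (Hrank : forall a b, E a b -> rank a < rank b)
  (Hparent : forall a b c, E a c -> E b c -> a = b).

(* When edges strictly increase a rank and parents are unique, there is no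
   simple cycle: its node of maximal rank would have its two (distinct) cycle
   neighbours as parents. *)
Lemma no_ucycle_of_rank c : ~ ucycle c.
Proof.
  intros Hcyc. destruct c as [|a l]; [exact Hcyc|].
  destruct (exists_max rank (a :: l)) as [w [Hw Hmax]]; [discriminate|].
  destruct (in_split _ _ Hw) as [k1 [k2 Hk]]. rewrite Hk in Hcyc, Hmax.
  apply ucycle_rotate in Hcyc.
  assert (Hin : forall v, In v (w :: k2 ++ k1) -> In v (k1 ++ w :: k2)).
  { intros v Hv. exact (Permutation_in _ (Permutation_app_comm (w :: k2) k1) Hv). }
  simpl in Hcyc. destruct (k2 ++ k1) as [|c l'] eqn:Hl; [simpl in Hcyc; lia|].
  destruct Hcyc as [Hnd [Hlen [[Hwc _] Hcl]]]. rewrite last_cons in Hcl.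
  assert (Hd_in : In (last l' c) l').
  { destruct l' as [|e l']; [simpl in Hlen; lia|rewrite last_cons; apply last_in]. }
  assert (Hpar : forall v, In v (w :: c :: l') -> uadj E v w \/ uadj E w v -> E v w).
  { intros v Hv Hadj. specialize (Hmax v (Hin v Hv)).
    destruct Hadj as [[H|H]|[H|H]]; auto; specialize (Hrank _ _ H); lia. }
  assert (Ec : E c w) by (apply Hpar; [simpl; auto|right; exact Hwc]).
  assert (Ed : E (last l' c) w) by (apply Hpar; [simpl; auto|left; exact Hcl]).
  rewrite (Hparent _ _ _ Ec Ed) in Hnd.
  inversion Hnd as [|? ? _ Hnd2]. inversion Hnd2 as [|? ? Hnot _]. auto.
Qed.

Lemma tree_like_of_rank : tree_like E.
Proof.
  split; [|split].
  - intros n H. pose proof (Hrank n n H). lia.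
  - intros n m H1 H2. pose proof (Hrank n m H1). pose proof (Hrank m n H2). lia.
  - intros [a [l Hcyc]]. exact (no_ucycle_of_rank (a :: l) Hcyc).
Qed.
End Ranked.
End Graphs.

Lemma defined_neg {F : Type} {neg : F -> F} {t f u : F} {Fd : F -> Prop}
  {R : F -> (F -> Prop) -> Prop} :
  fact_space neg t f u -> jframe neg t f u Fd R -> forall y, Fd (neg y) <-> Fd y.
Proof.
  intros [Hinv _] [HFd _] y. split.
  - intros H. apply HFd in H. destruct H as [a [Ha Hy]].
    rewrite <- (Hinv y), Hy, Hinv. exact Ha.
  - intros H. apply HFd. exists y. auto.
Qed.

Section Complementation.
Variables (F : Type) (neg : F -> F) (t f u : F) (Fd : F -> Prop)
  (R : F -> (F -> Prop) -> Prop).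
Hypotheses (HFS : fact_space neg t f u) (HJF : jframe neg t f u Fd R)
  (HC : complementary neg Fd R).

(* A graph whose node [n] carries the fact [fact n] and whose children of [n]
   are obtained by letting a selection function [sel n] pick one element from
   every body of a rule for [fact n] (this is what a strategy of player F does).
   Relabelling every node by [neg (fact n)] yields a locally complete
   justification: the children of [n] realise [neg (fact n) <- neg Im(sel n)],
   a rule of R* = R. *)
Variables (N : Type) (E : N -> N -> Prop) (fact : N -> F)
  (sel : N -> (F -> Prop) -> F).
Hypotheses
  (Hsel : forall n A, R (fact n) A -> A (sel n A))
  (Hchild : forall n A, R (fact n) A -> exists m, E n m /\ fact m = sel n A)
  (Hedge : forall n m, E n m -> exists A, R (fact n) A /\ fact m = sel n A).

Lemma complement_justification : justification Fd R E (fun n => neg (fact n)).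
Proof.
  destruct HJF as [_ [_ [_ [_ [HRFd _]]]]].
  intros n [m0 Hm0]. destruct (Hedge n m0 Hm0) as [A0 [HR0 _]].
  assert (Hdef : Fd (fact n)) by exact (HRFd _ _ HR0).
  split; [apply (defined_neg HFS HJF); exact Hdef|].
  apply HC. exists (fact n), (sel n).
  split; [exact Hdef|]. split; [intros A HA; exact (Hsel n A HA)|].
  split; [reflexivity|].
  apply functional_extensionality. intros z. apply propositional_extensionality. split.
  - intros [m [Hm <-]]. destruct (Hedge n m Hm) as [A [HR ->]].
    exists (sel n A). split; [exists A; auto|reflexivity].
  - intros [a [[A [HR <-]] ->]]. destruct (Hchild n A HR) as [m [Hm Hfm]].
    exists m. rewrite Hfm. auto.
Qed.

Lemma complement_locally_complete : locally_complete Fd E (fun n => neg (fact n)).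
Proof.
  destruct HJF as [_ [_ [_ [_ [_ [_ HFdR]]]]]].
  intros n Hleaf Hdef. apply (proj1 (defined_neg HFS HJF _)) in Hdef.
  destruct (HFdR _ Hdef) as [A HR]. destruct (Hchild n A HR) as [m [Hm _]].
  apply Hleaf. exists m. exact Hm.
Qed.
End Complementation.

Arguments complement_justification {F neg t f u Fd R} HFS HJF HC {N E fact sel}.
Arguments complement_locally_complete {F neg t f u Fd R} HFS HJF {N E fact sel}.

Section Positional.
Variables (F : Type) (R : F -> (F -> Prop) -> Prop) (tau : F -> (F -> Prop) -> F)
  (x : F).
Hypothesis Hs : pos_strategy R tau.

Definition pos_move (s s' : gstate F) : Prop :=
  gedge R s s' /\ forall y A, s = SF y A -> s' = ST (tau y A).

Definition pos_succ (y z : F) : Prop := exists A, R y A /\ z = tau y A.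

Lemma pos_consistent_snoc s0 l b : pos_consistent tau s0 (l ++ [b]) <->
  pos_consistent tau s0 l /\ (forall y A, last l s0 = SF y A -> b = ST (tau y A)).
Proof. exact (history_snoc _ l b). Qed.

Lemma pos_play_walk l : pos_play R tau x l <-> walk pos_move (ST x) l.
Proof.
  induction l as [|b l IH] using rev_ind.
  - split; intros _; [exact I|]. split; [exact I|exact (history_nil _)].
  - rewrite walk_snoc, <- IH. unfold pos_play, pos_move.
    rewrite !chain_walk, walk_snoc, pos_consistent_snoc. tauto.
Qed.

Lemma pos_move_reach s : clos_refl_trans _ pos_move (ST x) s ->
  clos_refl_trans F pos_succ x (fact_of s).
Proof.
  intros Hr. apply clos_rt_rtn1 in Hr.
  induction Hr as [|s s' [Hg Htau] _ IH]; [apply rt_refl|].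
  destruct s as [y|y A], s' as [z|z B]; simpl in Hg; try tauto.
  - destruct Hg as [-> _]. exact IH.
  - apply rt_trans with y; [exact IH|].
    apply rt_step. exists A. split; [exact (proj1 Hg)|].
    specialize (Htau y A eq_refl). simpl. congruence.
Qed.

Lemma pos_succ_reach y : clos_refl_trans F pos_succ x y ->
  clos_refl_trans _ pos_move (ST x) (ST y).
Proof.
  intros Hr. apply clos_rt_rtn1 in Hr.
  induction Hr as [|y z [A [HR ->]] _ IH]; [apply rt_refl|].
  apply rt_trans with (ST y); [exact IH|].
  apply rt_trans with (SF y A); apply rt_step; split.
  - simpl. auto.
  - discriminate.
  - simpl. split; [exact HR|exact (Hs y A HR)].
  - intros y' A' Heq. injection Heq as -> ->. reflexivity.
Qed.

Lemma pos_reach_iff y :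
  clos_refl_trans _ pos_move (ST x) (ST y) <-> clos_refl_trans F pos_succ x y.
Proof.
  split; [exact (pos_move_reach (ST y))|apply pos_succ_reach].
Qed.

Lemma pos_node_iff y : (exists l, pos_play R tau x l /\ In (ST y) (ST x :: l)) <->
  clos_refl_trans F pos_succ x y.
Proof.
  rewrite <- pos_reach_iff, <- visited_iff_reachable. split.
  - intros [l [Hp Hin]]. exists l. rewrite <- pos_play_walk. auto.
  - intros [l [Hw Hin]]. exists l. rewrite pos_play_walk. auto.
Qed.

Lemma pos_traversed_iff a b :
  (exists l, pos_play R tau x l /\ on_path a b (ST x :: l)) <->
  clos_refl_trans _ pos_move (ST x) a /\ pos_move a b.
Proof.
  rewrite <- traversed_iff_step. split.
  - intros [l [Hp Hon]]. exists l. rewrite <- pos_play_walk. auto.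
  - intros [l [Hw Hon]]. exists l. rewrite pos_play_walk. auto.
Qed.

Lemma pos_edge_iff (n m : JposN R tau x) :
  JposE n m <-> pos_succ (proj1_sig n) (proj1_sig m).
Proof.
  destruct n as [y Hy], m as [z Hz]; simpl. unfold JposE; simpl.
  setoid_rewrite pos_traversed_iff. split.
  - intros [A [[_ [[_ HR] _]] [_ [_ Htau]]]]. exists A. split; [exact HR|].
    specialize (Htau y A eq_refl). congruence.
  - intros [A [HR ->]].
    assert (Hry : clos_refl_trans _ pos_move (ST x) (ST y))
      by (apply pos_reach_iff, pos_node_iff; exact Hy).
    assert (Hmove : pos_move (ST y) (SF y A)) by (split; [simpl; auto|discriminate]).
    exists A. split; [split; [exact Hry|exact Hmove]|split].
    + apply rt_trans with (ST y); [exact Hry|apply rt_step; exact Hmove].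
    + split; [simpl; split; [exact HR|exact (Hs y A HR)]|].
      intros y' A' Heq. injection Heq as -> ->. reflexivity.
Qed.

Definition pos_root : JposN R tau x :=
  exist _ x (proj2 (pos_node_iff x) (rt_refl _ _ x)).

Lemma pos_rooted (n : JposN R tau x) : clos_refl_trans _ (@JposE F R tau x) pos_root n.
Proof.
  destruct n as [y Hy]. pose proof (proj1 (pos_node_iff y) Hy) as Hr.
  revert Hy. apply clos_rt_rtn1 in Hr.
  induction Hr as [|y z Hyz Hr IH]; intros Hz.
  - replace (exist _ x Hz) with pos_root by (apply sig_ext; reflexivity). apply rt_refl.
  - set (ny := exist _ y (proj2 (pos_node_iff y) (clos_rtn1_rt _ _ _ _ Hr))
                : JposN R tau x).
    apply rt_trans with ny; [apply IH|apply rt_step, pos_edge_iff; exact Hyz].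
Qed.

Lemma pos_child (n : JposN R tau x) A : R (proj1_sig n) A ->
  exists m, JposE n m /\ proj1_sig m = tau (proj1_sig n) A.
Proof.
  destruct n as [y Hy]; simpl. intros HR.
  assert (Hsucc : pos_succ y (tau y A)) by (exists A; auto).
  assert (Hm : clos_refl_trans F pos_succ x (tau y A)).
  { apply rt_trans with y; [apply pos_node_iff; exact Hy|apply rt_step; exact Hsucc]. }
  exists (exist _ (tau y A) (proj2 (pos_node_iff _) Hm)). split; [|reflexivity].
  apply pos_edge_iff. exact Hsucc.
Qed.

Lemma positional_justification (neg : F -> F) (t f u : F) (Fd : F -> Prop) :
  fact_space neg t f u -> jframe neg t f u Fd R -> complementary neg Fd R ->
  justification Fd R (@JposE F R tau x) (@Jpos_lab F R neg tau x) /\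
  connected (@JposE F R tau x) /\
  locally_complete Fd (@JposE F R tau x) (@Jpos_lab F R neg tau x) /\
  graph_like (@Jpos_lab F R neg tau x) /\
  is_root (@JposE F R tau x) (@Jpos_lab F R neg tau x) (neg x).
Proof.
  intros HFS HJF HC.
  assert (Hedge : forall n m : JposN R tau x, JposE n m ->
            exists A, R (proj1_sig n) A /\ proj1_sig m = tau (proj1_sig n) A)
    by (intros n m; apply pos_edge_iff).
  split; [|split; [|split; [|split]]].
  - exact (complement_justification HFS HJF HC (fun n A HR => Hs _ A HR) pos_child Hedge).
  - exact (connected_of_rooted _ _ pos_root pos_rooted).
  - exact (complement_locally_complete HFS HJF pos_child).
  - intros n m H. apply sig_ext. destruct HFS as [Hinv _].
    rewrite <- (Hinv (proj1_sig n)). unfold Jpos_lab in H. rewrite H. apply Hinv.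
  - exists pos_root. split; [reflexivity|exact pos_rooted].
Qed.
End Positional.

Arguments positional_justification {F R tau x} Hs {neg t f u Fd}.

Section General.
Variables (F : Type) (R : F -> (F -> Prop) -> Prop)
  (tau : gstate F -> list (gstate F) -> F) (x : F).
Hypothesis Hs : gen_strategy R tau.

Definition gen_fact (p : list (gstate F)) : F := fact_of (last p (ST x)).
Definition gen_sel (p : list (gstate F)) (A : F -> Prop) : F :=
  tau (ST x) (p ++ [SF (gen_fact p) A]).

Lemma gen_consistent_snoc s0 l b : gen_consistent tau s0 (l ++ [b]) <->
  gen_consistent tau s0 l /\ (forall y A, last l s0 = SF y A -> b = ST (tau s0 l)).
Proof. exact (history_snoc _ l b). Qed.

Lemma gen_answer p y A : chain R (ST x) p -> last p (ST x) = ST y -> R y A ->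
  A (tau (ST x) (p ++ [SF y A])).
Proof.
  intros Hc Hl HR. apply (Hs (ST x) _ y A I); [|apply last_last].
  rewrite chain_walk, walk_snoc, Hl, <- chain_walk. simpl. auto.
Qed.

Lemma gen_node_nil : gen_node R tau x [].
Proof. split; [exact I|split; [exact (history_nil _)|exists x; reflexivity]]. Qed.

Lemma gen_node_snoc p y A z :
  gen_node R tau x (p ++ [SF y A; ST z]) <->
  gen_node R tau x p /\ last p (ST x) = ST y /\ R y A /\
  z = tau (ST x) (p ++ [SF y A]).
Proof.
  change [SF y A; ST z] with ([SF y A] ++ [ST z]). rewrite app_assoc.
  unfold gen_node. rewrite chain_walk, !walk_snoc, last_last, <- chain_walk.
  rewrite !gen_consistent_snoc, last_last. split.
  - intros [[[Hc Hg1] [HR HA]] [[[Hk _] Htau] _]].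
    destruct (last p (ST x)) as [w|w B] eqn:Hl; simpl in Hg1; [|tauto].
    destruct Hg1 as [<- _]. repeat split; auto.
    + exists y. reflexivity.
    + specialize (Htau y A eq_refl). congruence.
  - intros [[Hc [Hk _]] [Hl [HR ->]]].
    repeat split; auto.
    + rewrite Hl. simpl. auto.
    + exact (gen_answer p y A Hc Hl HR).
    + intros y' A' Heq. rewrite Hl in Heq. discriminate.
    + exists (tau (ST x) (p ++ [SF y A])). apply last_last.
Qed.

Lemma gen_node_shape p : gen_node R tau x p ->
  p = [] \/ exists p' y A z, p = p' ++ [SF y A; ST z].
Proof.
  intros [Hc [_ [y Hy]]].
  destruct p as [|s p] using rev_ind; [left; reflexivity|right].
  rewrite last_last in Hy. subst s.
  rewrite chain_walk, walk_snoc in Hc. destruct Hc as [Hc Hg].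
  destruct p as [|s p] using rev_ind; [simpl in Hg; tauto|].
  rewrite last_last in Hg. destruct s as [z|z A]; simpl in Hg; [tauto|].
  exists p, z, A, y. rewrite <- app_assoc. reflexivity.
Qed.

Lemma gen_fact_node (n : JgenN R tau x) :
  last (proj1_sig n) (ST x) = ST (gen_fact (proj1_sig n)).
Proof.
  destruct n as [p Hp]. unfold gen_fact. simpl. destruct Hp as [_ [_ [y Hy]]].
  rewrite Hy. reflexivity.
Qed.

Lemma gen_sel_answer (n : JgenN R tau x) A : R (gen_fact (proj1_sig n)) A ->
  A (gen_sel (proj1_sig n) A).
Proof.
  intros HR. unfold gen_sel.
  apply gen_answer; [exact (proj1 (proj2_sig n))|apply gen_fact_node|exact HR].
Qed.

Lemma gen_child (n : JgenN R tau x) A : R (gen_fact (proj1_sig n)) A ->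
  exists m, JgenE n m /\ gen_fact (proj1_sig m) = gen_sel (proj1_sig n) A.
Proof.
  intros HR.
  assert (Hm : gen_node R tau x (proj1_sig n ++
                 [SF (gen_fact (proj1_sig n)) A; ST (gen_sel (proj1_sig n) A)]))
    by (apply gen_node_snoc; split; [exact (proj2_sig n)|];
        split; [apply gen_fact_node|split; [exact HR|reflexivity]]).
  exists (exist _ _ Hm). split.
  - do 3 eexists. reflexivity.
  - unfold gen_fact at 1. simpl.
    change [SF (gen_fact (proj1_sig n)) A; ST (gen_sel (proj1_sig n) A)]
      with ([SF (gen_fact (proj1_sig n)) A] ++ [ST (gen_sel (proj1_sig n) A)]).
    rewrite app_assoc, last_last. reflexivity.
Qed.

Lemma gen_parent (n m : JgenN R tau x) : JgenE n m ->
  exists A, R (gen_fact (proj1_sig n)) A /\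
    gen_fact (proj1_sig m) = gen_sel (proj1_sig n) A.
Proof.
  intros [y [A [z Hm]]].
  pose proof (proj2_sig m) as Hnode. simpl in Hnode. rewrite Hm in Hnode.
  apply gen_node_snoc in Hnode. destruct Hnode as [_ [Hl [HR Hz]]].
  assert (Hy : gen_fact (proj1_sig n) = y) by (unfold gen_fact; rewrite Hl; reflexivity).
  exists A. rewrite Hy. split; [exact HR|].
  unfold gen_fact at 1, gen_sel. rewrite Hm, Hy, <- Hz.
  change [SF y A; ST z] with ([SF y A] ++ [ST z]). rewrite app_assoc, last_last.
  reflexivity.
Qed.

Definition gen_root : JgenN R tau x := exist _ [] gen_node_nil.

Lemma gen_rooted (n : JgenN R tau x) : clos_refl_trans _ (@JgenE F R tau x) gen_root n.
Proof.
  remember (length (proj1_sig n)) as k eqn:Hk. revert n Hk.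
  induction k as [k IH] using lt_wf_ind. intros n Hk.
  destruct (gen_node_shape _ (proj2_sig n)) as [Hroot|[p' [y [A [z Hp]]]]].
  - replace n with gen_root by (apply sig_ext; rewrite Hroot; reflexivity).
    apply rt_refl.
  - pose proof (proj2_sig n) as Hn. rewrite Hp in Hn.
    pose proof (proj1 (proj1 (gen_node_snoc p' y A z) Hn)) as Hp'.
    apply rt_trans with (exist _ p' Hp').
    + apply (IH (length p')); [rewrite Hk, Hp, length_app; simpl; lia|reflexivity].
    + apply rt_step. exists y, A, z. exact Hp.
Qed.

Lemma gen_edge_length (n m : JgenN R tau x) : JgenE n m ->
  length (proj1_sig n) < length (proj1_sig m).
Proof. intros [y [A [z ->]]]. rewrite length_app. simpl. lia. Qed.

Lemma gen_unique_parent (a b c : JgenN R tau x) : JgenE a c -> JgenE b c -> a = b.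
Proof.
  intros [y [A [z Ha]]] [y' [A' [z' Hb]]]. apply sig_ext. rewrite Ha in Hb.
  change [SF y A; ST z] with ([SF y A] ++ [ST z]) in Hb.
  change [SF y' A'; ST z'] with ([SF y' A'] ++ [ST z']) in Hb.
  rewrite !app_assoc in Hb. apply app_inj_tail in Hb. destruct Hb as [Hb _].
  apply app_inj_tail in Hb. exact (proj1 Hb).
Qed.

Lemma general_justification (neg : F -> F) (t f u : F) (Fd : F -> Prop) :
  fact_space neg t f u -> jframe neg t f u Fd R -> complementary neg Fd R ->
  justification Fd R (@JgenE F R tau x) (@Jgen_lab F R neg tau x) /\
  connected (@JgenE F R tau x) /\
  locally_complete Fd (@JgenE F R tau x) (@Jgen_lab F R neg tau x) /\
  tree_like (@JgenE F R tau x) /\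
  is_root (@JgenE F R tau x) (@Jgen_lab F R neg tau x) (neg x).
Proof.
  intros HFS HJF HC.
  split; [|split; [|split; [|split]]].
  - exact (complement_justification HFS HJF HC gen_sel_answer gen_child gen_parent).
  - exact (connected_of_rooted _ _ gen_root gen_rooted).
  - exact (complement_locally_complete HFS HJF gen_child).
  - exact (tree_like_of_rank _ _ _ gen_edge_length gen_unique_parent).
  - exists gen_root. split; [reflexivity|exact gen_rooted].
Qed.
End General.

Arguments general_justification {F R tau x} Hs {neg t f u Fd}.

Theorem mainTheorem7 (F : Type) (neg : F -> F) (t f u : F) (Fd : F -> Prop)
  (R : F -> (F -> Prop) -> Prop)
  (HFS : fact_space neg t f u) (HJF : jframe neg t f u Fd R)
  (HC : complementary neg Fd R) (x : F) (Hx : Fd x) :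
  (forall tau : F -> (F -> Prop) -> F, pos_strategy R tau ->
     justification Fd R (@JposE F R tau x) (@Jpos_lab F R neg tau x) /\
     connected (@JposE F R tau x) /\
     locally_complete Fd (@JposE F R tau x) (@Jpos_lab F R neg tau x) /\
     graph_like (@Jpos_lab F R neg tau x) /\
     is_root (@JposE F R tau x) (@Jpos_lab F R neg tau x) (neg x)) /\
  (forall tau : gstate F -> list (gstate F) -> F, gen_strategy R tau ->
     justification Fd R (@JgenE F R tau x) (@Jgen_lab F R neg tau x) /\
     connected (@JgenE F R tau x) /\
     locally_complete Fd (@JgenE F R tau x) (@Jgen_lab F R neg tau x) /\
     tree_like (@JgenE F R tau x) /\
     is_root (@JgenE F R tau x) (@Jgen_lab F R neg tau x) (neg x)).
Proof.
  split; intros tau Hs.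
  - exact (positional_justification Hs HFS HJF HC).
  - exact (general_justification Hs HFS HJF HC).
Qed.
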